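(* Let $A(x)=\sin^2(2\pi x)$, $\hat m(A)=\frac{A(1/3)+A(2/3)}{2}$, $\eta(x)=\frac{x}{4}+\frac12$, $F(x)=A(\frac{x}{2})+A(\frac{x}{4}+\frac12)$, and $V_2(x)=\lim_{n\to\infty}\sum_{i=0}^{n-1}[F(\eta^i(x))-2\hat m(A)]$ for $x\in[0,1]$. Then the function $V_1(x)=V_2\left(\frac{x+1}{2}\right)+A\left(\frac{x+1}{2}\right)-\hat m(A)$ satisfies, for all $x\in[0,1]$, $$V_1(x/2)+A(x/2)=V_2(x)+\hat m(A).$$
   Context: $\eta^i$ denotes the $i$-th iterate of $\eta$, with $\eta^0$ the identity. *)

From Stdlib Require Import Reals.
From Coquelicot Require Import Coquelicot.
Open Scope R_scope.

Definition A (x : R) : R := (sin (2 * PI * x)) ^ 2.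

Definition mhat : R := (A (1/3) + A (2/3)) / 2.

Definition eta (x : R) : R := x / 4 + 1 / 2.

Definition eta_iter (i : nat) (x : R) : R := Nat.iter i eta x.

Definition F (x : R) : R := A (x / 2) + A (x / 4 + 1 / 2).

Fixpoint psum (x : R) (n : nat) : R :=
  match n with
  | O => 0
  | S k => psum x k + (F (eta_iter k x) - 2 * mhat)
  end.

Definition V2 (x : R) : R := real (Lim_seq (psum x)).

Definition V1 (x : R) : R := V2 ((x + 1) / 2) + A ((x + 1) / 2) - mhat.

(** [2/3] is the attracting fixed point of [eta], with contraction ratio [1/4], and
    [F (2/3) = 2 mhat].  Since [A], hence [F], is Lipschitz, the terms of the series
    defining [V2 x] decay geometrically, so it converges. *)

From Stdlib Require Import Reals Lra.
From Coquelicot Require Import Coquelicot.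
Open Scope R_scope.

Lemma Rabs_sub_le_of_derive (f df : R -> R) (M : R) :
  (forall x, is_derive f x (df x)) -> (forall x, Rabs (df x) <= M) ->
  forall u v, Rabs (f u - f v) <= M * Rabs (u - v).
Proof.
  intros f_df df_le u v.
  destruct (MVT_abs f df v u) as [c [-> _]].
  - intros c _. apply is_derive_Reals, f_df.
  - apply Rmult_le_compat_r; [apply Rabs_pos | apply df_le].
Qed.

Lemma A_lipschitz (u v : R) : Rabs (A u - A v) <= 4 * PI * Rabs (u - v).
Proof.
  apply (Rabs_sub_le_of_derive A
           (fun x => 4 * PI * (sin (2 * PI * x) * cos (2 * PI * x))) (4 * PI)).
  - intros x. unfold A. auto_derive; [exact I | ring].
  - intros x. rewrite Rabs_mult, (Rabs_right (4 * PI)) by (pose proof PI_RGT_0; lra).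
    rewrite <- (Rmult_1_r (4 * PI)) at 2.
    apply Rmult_le_compat_l; [pose proof PI_RGT_0; lra |].
    rewrite Rabs_mult, <- (Rmult_1_r 1).
    apply Rmult_le_compat; try apply Rabs_pos; apply Rabs_le;
      [apply SIN_bound | apply COS_bound].
Qed.

Lemma F_lipschitz (u v : R) : Rabs (F u - F v) <= 3 * PI * Rabs (u - v).
Proof.
  unfold F.
  replace (A (u / 2) + A (u / 4 + 1 / 2) - (A (v / 2) + A (v / 4 + 1 / 2)))
    with ((A (u / 2) - A (v / 2)) + (A (u / 4 + 1 / 2) - A (v / 4 + 1 / 2))) by ring.
  eapply Rle_trans; [apply Rabs_triang |].
  pose proof (A_lipschitz (u / 2) (v / 2)) as half.
  pose proof (A_lipschitz (u / 4 + 1 / 2) (v / 4 + 1 / 2)) as quarter.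
  replace (u / 2 - v / 2) with ((u - v) * / 2) in half by field.
  replace (u / 4 + 1 / 2 - (v / 4 + 1 / 2)) with ((u - v) * / 4) in quarter by field.
  rewrite Rabs_mult, Rabs_inv, (Rabs_right 2) in half by lra.
  rewrite Rabs_mult, Rabs_inv, (Rabs_right 4) in quarter by lra.
  lra.
Qed.

Lemma F_two_thirds : F (2 / 3) = 2 * mhat.
Proof.
  unfold F, mhat.
  replace (2 / 3 / 2) with (1 / 3) by field.
  replace (2 / 3 / 4 + 1 / 2) with (2 / 3) by field.
  field.
Qed.

Lemma eta_iter_sub_two_thirds (k : nat) (y : R) :
  eta_iter k y - 2 / 3 = (1 / 4) ^ k * (y - 2 / 3).
Proof.
  induction k as [| k IHk]; unfold eta_iter in *.
  - simpl. ring.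
  - rewrite Nat.iter_succ. unfold eta at 1. simpl. lra.
Qed.

Lemma ex_series_F_eta_iter (y : R) :
  ex_series (fun k => F (eta_iter k y) - 2 * mhat).
Proof.
  apply (@ex_series_le R_AbsRing R_CompleteNormedModule _
           (fun k => (3 * PI * Rabs (y - 2 / 3)) * (1 / 4) ^ k)).
  - intros k. change norm with Rabs. simpl.
    rewrite <- F_two_thirds.
    eapply Rle_trans; [apply F_lipschitz |].
    rewrite eta_iter_sub_two_thirds, Rabs_mult, (Rabs_right ((1 / 4) ^ k))
      by (apply Rle_ge, pow_le; lra).
    lra.
  - apply (@ex_series_scal_l R_AbsRing R_NormedModule), ex_series_geom.
    rewrite Rabs_right; lra.
Qed.

Lemma psum_succ (y : R) (n : nat) :
  psum y (S n) = sum_n (fun k => F (eta_iter k y) - 2 * mhat) n.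
Proof.
  induction n as [| n IHn].
  - rewrite sum_O. simpl. ring.
  - rewrite sum_Sn, <- IHn. reflexivity.
Qed.

Lemma V2_Series (y : R) : V2 y = Series (fun k => F (eta_iter k y) - 2 * mhat).
Proof.
  unfold V2, Series. rewrite <- Lim_seq_incr_1.
  f_equal. apply Lim_seq_ext, psum_succ.
Qed.

Lemma V2_eta (y : R) : V2 y = F y - 2 * mhat + V2 (eta y).
Proof.
  rewrite !V2_Series, Series_incr_1 by apply ex_series_F_eta_iter.
  f_equal. apply Series_ext. intros k. unfold eta_iter. rewrite Nat.iter_succ_r.
  reflexivity.
Qed.

Theorem mainTheorem9 (x : R) (hx0 : 0 <= x) (hx1 : x <= 1) :
  V1 (x / 2) + A (x / 2) = V2 x + mhat.
Proof.
  unfold V1.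
  replace ((x / 2 + 1) / 2) with (eta x) by (unfold eta; field).
  rewrite (V2_eta x). unfold F, eta. ring.
Qed.
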